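(* Let $N\ge1$, $\Delta v=1/N$, $v_j=-1+\frac{\Delta v}{2}+(j-1)\Delta v$ for $j=1,\dots,2N$, $v_{j+1/2}=-1+j\Delta v$ for $j=0,\dots,2N$ (so $v_{1/2}=-1$, $v_{2N+1/2}=1$), and $V=(v_1,\dots,v_{2N})^T$. Define $D\in\mathcal{M}_{2N,2N}(\mathbb{R})$ by $$(DF)_j=\frac{1}{\Delta v^2}\Big((1-v_{j+1/2}^2)(F_{j+1}-F_j)-(1-v_{j-1/2}^2)(F_j-F_{j-1})\Big),\quad j=1,\dots,2N,$$ (the terms involving $F_0$ and $F_{2N+1}$ vanish since $1-v_{1/2}^2=1-v_{2N+1/2}^2=0$). Then $D\mathbf{1}=0$ and $DV=-2V$, where $\mathbf{1}=(1,\dots,1)^T$. Moreover $D$ is symmetric, its off-diagonal coefficients are nonnegative, and $I+\delta D$ is a bistochastic matrix for all $\delta>0$ small enough.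
   Context: $D$ is the discretization of the one-dimensional Fokker–Planck operator $\partial_v((1-v^2)\partial_v f)$ on $v\in[-1,1]$. A bistochastic matrix is a matrix with nonnegative entries whose rows and columns each sum to $1$. *)

(* Indices are 0-based: i : 'I_(2*N) corresponds to j = i+1. *)
From mathcomp Require Import all_boot all_order all_algebra.
Set Implicit Arguments. Unset Strict Implicit. Unset Printing Implicit Defensive.
Import Order.TTheory GRing.Theory Num.Theory.
Local Open Scope ring_scope.

Definition dv (R : realFieldType) (N : nat) : R := (N%:R)^-1.

Definition vc (R : realFieldType) (N : nat) (i : nat) : R :=
  -1 + dv R N / 2 + i%:R * dv R N.

Definition vf (R : realFieldType) (N : nat) (k : nat) : R :=
  -1 + k%:R * dv R N.

Definition Vvec (R : realFieldType) (N : nat) : 'cV[R]_(2 * N) :=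
  \col_(i < 2 * N) vc R N i.

Definition ones (R : realFieldType) (n : nat) : 'cV[R]_n := \col_(i < n) 1.

(* (DF)_i = 1/dv^2 ((1 - vf(i+1)^2)(F_{i+1} - F_i) - (1 - vf(i)^2)(F_i - F_{i-1}))
   written as matrix entries (out-of-range neighbours have zero coefficient). *)
Definition Dmx (R : realFieldType) (N : nat) : 'M[R]_(2 * N) :=
  \matrix_(i < 2 * N, k < 2 * N)
    ((dv R N ^+ 2)^-1 *
     (if k == i.+1 :> nat then 1 - vf R N i.+1 ^+ 2
      else if k.+1 == i :> nat then 1 - vf R N i ^+ 2
      else if k == i then - ((1 - vf R N i.+1 ^+ 2) + (1 - vf R N i ^+ 2))
      else 0)).

Definition bistochastic (R : realFieldType) (n : nat) (A : 'M[R]_n) : Prop :=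
  (forall i j, 0 <= A i j) /\
  (forall i, \sum_(j < n) A i j = 1) /\
  (forall j, \sum_(i < n) A i j = 1).

From mathcomp Require Import all_boot all_order all_algebra.
From mathcomp Require Import zify ring lra.
Import Order.TTheory GRing.Theory Num.Theory.
Set Implicit Arguments. Unset Strict Implicit. Unset Printing Implicit Defensive.
Local Open Scope ring_scope.

(* Up to the factor N^2, D is the finite-volume matrix of F |-> (c F')' with
   face weights c_k = 1 - v_{k+1/2}^2.  Such a matrix is symmetric, has
   nonnegative off-diagonal entries when c >= 0, and, as c vanishes on both
   boundary faces, sends an affine vector (F_{k+1} - F_k = d) to
   (d (c_{i+1} - c_i))_i; hence D 1 = 0, and D V = -2 V because
   c_{i+1} - c_i = -2 v_i dv.  Finally I + delta A is bistochastic for every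
   symmetric A with zero row sums and nonnegative off-diagonal entries as soon
   as delta |A_ii| <= 1, which for D holds when delta <= dv^2 / 2 since c <= 1. *)

Lemma sum_ord_eq_if (R : pzSemiRingType) n (F : nat -> R) m (x : R) :
  \sum_(k < n) (if k == m :> nat then x else 0) * F k =
  if (m < n)%N then x * F m else 0.
Proof.
under eq_bigr do rewrite (fun_if (fun y => y * F _)) mul0r.
by rewrite -big_mkcond (big_ord1_eq _ (fun k => x * F k)).
Qed.

Section DivGrad.
Variables (R : realFieldType) (n : nat) (c : nat -> R).

Definition divgrad_mx : 'M[R]_n :=
  \matrix_(i < n, k < n)
    (if k == i.+1 :> nat then c i.+1
     else if k.+1 == i :> nat then c i
     else if k == i then - (c i.+1 + c i)
     else 0).

Lemma divgrad_mx_tr : divgrad_mx^T = divgrad_mx.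
Proof.
apply/matrixP => -[i lt_i] [k lt_k]; rewrite !mxE -!val_eqE /=.
by (repeat case: ifP => /eqP ?); subst => //; lia.
Qed.

Lemma divgrad_mx_offdiag_ge0 :
  (forall k, (k <= n)%N -> 0 <= c k) ->
  forall i k, i != k -> 0 <= divgrad_mx i k.
Proof.
move=> c_ge0 [i lt_i] [k lt_k]; rewrite -val_eqE mxE -val_eqE /= eq_sym => /negbTE ->.
by do 2 (case: ifP => [_|_]; first by apply: c_ge0; lia).
Qed.

Lemma divgrad_mx_diag (i : 'I_n) : divgrad_mx i i = - (c i.+1 + c i).
Proof. by rewrite mxE (ltn_eqF (ltnSn i)) (gtn_eqF (ltnSn i)) eqxx. Qed.

Lemma divgrad_mxE i k :
  divgrad_mx i k =
    (if k == i.+1 :> nat then c i.+1 else 0) +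
    (if k.+1 == i :> nat then c i else 0) +
    (if k == i :> nat then - (c i.+1 + c i) else 0).
Proof.
rewrite mxE -val_eqE /=.
by (repeat case: ifP => /eqP ?); rewrite ?addr0 ?add0r //; lia.
Qed.

Hypotheses (c0 : c 0%N = 0) (cn : c n = 0).

Lemma divgrad_mx_mul_col (F : nat -> R) (i : 'I_n) :
  (divgrad_mx *m \col_(k < n) F k) i 0 =
  c i.+1 * (F i.+1 - F i) - c i * (F i - F i.-1).
Proof.
rewrite mxE; under eq_bigr do rewrite divgrad_mxE mxE !mulrDl.
rewrite !big_split /= !sum_ord_eq_if ltn_ord.
have -> : (if (i.+1 < n)%N then c i.+1 * F i.+1 else 0) = c i.+1 * F i.+1.
  have [//|le_ni] := ltnP i.+1 n.
  have last_i : i.+1 = n by have := ltn_ord i; lia.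
  by rewrite last_i cn mul0r.
case: i => [[|i] lt_i] /=; last first.
  under eq_bigr do rewrite eqSS.
  by rewrite sum_ord_eq_if ltnW //; ring.
by under eq_bigr do rewrite mul0r; rewrite big1_eq c0; ring.
Qed.

Lemma divgrad_mx_mul_affine (F : nat -> R) d :
  (forall k, F k.+1 - F k = d) ->
  divgrad_mx *m \col_(k < n) F k = \col_(i < n) (d * (c i.+1 - c i)).
Proof.
move=> dF; apply/matrixP => i j; rewrite ord1 divgrad_mx_mul_col mxE dF.
case: i => [[|i] /= _]; first by rewrite c0; ring.
by rewrite dF; ring.
Qed.

End DivGrad.

Lemma bistochastic_1_plus_scale (R : realFieldType) n (A : 'M[R]_n) delta :
  A^T = A -> A *m const_mx 1 = 0 :> 'cV_n ->
  (forall i j, i != j -> 0 <= A i j) ->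
  0 <= delta -> (forall i, delta * - A i i <= 1) ->
  bistochastic (1%:M + delta *: A).
Proof.
move=> A_sym A1 A_off delta_ge0 delta_diag.
set B := 1%:M + delta *: A.
have B_sym : B^T = B by rewrite linearD /= trmx1 linearZ /= A_sym.
have B1 : B *m const_mx 1 = const_mx 1 :> 'cV_n.
  by rewrite mulmxDl mul1mx -scalemxAl A1 scaler0 addr0.
have B_rows i : \sum_j B i j = 1.
  have := congr1 (fun M : 'cV[R]_n => M i 0) B1; rewrite !mxE => <-.
  by apply: eq_bigr => j _; rewrite [const_mx _ _ _]mxE mulr1.
split; [|split] => // [i j|j].
- rewrite !mxE; case: eqVneq => [<-|ij]; last by rewrite add0r mulr_ge0 ?A_off.
  by have := delta_diag i; rewrite mulr1n mulrN; lra.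
- by rewrite -(B_rows j); apply: eq_bigr => i _; rewrite -{1}B_sym mxE.
Qed.

Section FokkerPlanck.
Variables (R : realFieldType) (N : nat).
Hypothesis N_gt0 : (0 < N)%N.
Local Notation h := (dv R N).

Definition face_weight (k : nat) : R := 1 - vf R N k ^+ 2.

Lemma dv_gt0 : 0 < h.
Proof. by rewrite invr_gt0 ltr0n. Qed.

Lemma natr_mul_dv : N%:R * h = 1.
Proof. by rewrite mulfV // pnatr_eq0 -lt0n. Qed.

Lemma face_weight0 : face_weight 0%N = 0.
Proof. by rewrite /face_weight /vf mul0r addr0 sqrrN expr1n subrr. Qed.

Lemma face_weight_last : face_weight (2 * N) = 0.
Proof.
rewrite /face_weight /vf natrM -mulrA natr_mul_dv mulr1.
by rewrite (_ : -1 + 2 = 1 :> R) ?expr1n ?subrr //; lra.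
Qed.

Lemma face_weight_ge0 k : (k <= 2 * N)%N -> 0 <= face_weight k.
Proof.
move=> le_k; rewrite /face_weight /vf.
have kh_ge0 : 0 <= k%:R * h by rewrite mulr_ge0 // ltW // dv_gt0.
have kh_le2 : k%:R * h <= 2.
  have le_kN : k%:R <= (2 * N)%:R :> R by rewrite ler_nat.
  by have := ler_wpM2r (ltW dv_gt0) le_kN; rewrite natrM -mulrA natr_mul_dv mulr1.
nra.
Qed.

Lemma face_weight_le1 k : face_weight k <= 1.
Proof. by rewrite lerBlDr lerDl sqr_ge0. Qed.

Lemma Dmx_divgrad : Dmx R N = (h ^+ 2)^-1 *: divgrad_mx (2 * N) face_weight.
Proof. by apply/matrixP => i k; rewrite !mxE. Qed.

Lemma Dmx_tr : (Dmx R N)^T = Dmx R N.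
Proof. by rewrite Dmx_divgrad linearZ /= divgrad_mx_tr. Qed.

Lemma Dmx_offdiag_ge0 (i k : 'I_(2 * N)) : i != k -> 0 <= Dmx R N i k.
Proof.
move=> ik; rewrite Dmx_divgrad mxE mulr_ge0 //.
  by rewrite invr_ge0 exprn_ge0 // ltW // dv_gt0.
by apply: divgrad_mx_offdiag_ge0 => // m; apply: face_weight_ge0.
Qed.

Lemma Dmx_col_affine (F : nat -> R) d :
  (forall k, F k.+1 - F k = d) ->
  Dmx R N *m \col_(k < 2 * N) F k =
  \col_(i < 2 * N) ((h ^+ 2)^-1 * (d * (face_weight i.+1 - face_weight i))).
Proof.
move=> dF; rewrite Dmx_divgrad -scalemxAl.
rewrite (divgrad_mx_mul_affine face_weight0 face_weight_last dF).
by apply/matrixP => i j; rewrite !mxE.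
Qed.

Lemma Dmx_ones : Dmx R N *m ones R (2 * N) = 0.
Proof.
rewrite (Dmx_col_affine (F := fun=> 1) (d := 0)) => [|k]; last exact: subrr.
by apply/matrixP => i j; rewrite !mxE !mul0r mulr0.
Qed.

Lemma Dmx_Vvec : Dmx R N *m Vvec R N = (-2) *: Vvec R N.
Proof.
have h_neq0 : h != 0 by rewrite gt_eqF // dv_gt0.
rewrite (Dmx_col_affine (F := vc R N) (d := h)) => [|k]; last first.
  by rewrite /vc -natr1; ring.
apply/matrixP => i j; rewrite !mxE /face_weight /vf /vc -natr1.
by field.
Qed.

Lemma Dmx_diag_bound delta (i : 'I_(2 * N)) :
  0 <= delta -> delta <= h ^+ 2 / 2 -> delta * - Dmx R N i i <= 1.
Proof.
move=> delta_ge0 delta_le.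
have h2_gt0 : 0 < h ^+ 2 by rewrite exprn_gt0 // dv_gt0.
rewrite Dmx_divgrad mxE divgrad_mx_diag !mulrN opprK mulrA.
have w_le2 : face_weight i.+1 + face_weight i <= 2.
  by have := face_weight_le1 i.+1; have := face_weight_le1 i; lra.
have w_ge0 : 0 <= face_weight i.+1 + face_weight i.
  by rewrite addr_ge0 // face_weight_ge0 //; have := ltn_ord i; lia.
have : delta / h ^+ 2 <= 1 / 2.
  by rewrite ler_pdivrMr //; lra.
have : 0 <= delta / h ^+ 2 by rewrite divr_ge0 // ltW.
nra.
Qed.

End FokkerPlanck.

Theorem proposition4 (R : realFieldType) (N : nat) (hN : (1 <= N)%N) :
  Dmx R N *m ones R (2 * N) = 0 /\
  Dmx R N *m Vvec R N = (-2) *: Vvec R N /\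
  (Dmx R N)^T = Dmx R N /\
  (forall i k : 'I_(2 * N), i != k -> 0 <= Dmx R N i k) /\
  (exists delta0 : R, 0 < delta0 /\
     forall delta : R, 0 < delta -> delta <= delta0 ->
       bistochastic (1%:M + delta *: Dmx R N)).
Proof.
have D_const : Dmx R N *m const_mx 1 = 0 :> 'cV_(2 * N).
  by rewrite -Dmx_ones //; congr (_ *m _); apply/matrixP => i j; rewrite !mxE.
split; first exact: Dmx_ones.
split; first exact: Dmx_Vvec.
split; first exact: Dmx_tr.
split; first exact: Dmx_offdiag_ge0.
exists (dv R N ^+ 2 / 2); split; first by rewrite divr_gt0 // exprn_gt0 // dv_gt0.
move=> delta delta_gt0 delta_le.
apply: bistochastic_1_plus_scale; rewrite ?ltW //.
- exact: Dmx_tr.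
- exact: Dmx_offdiag_ge0.
- by move=> i; apply: Dmx_diag_bound => //; exact: ltW.
Qed.
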